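(* Let $k$ be a field of characteristic $2$, let $\mathcal{G}$ be the complete quadrilateral, $A=M_k(\mathcal{G},1)$ and $A'=A/\operatorname{Ann}(A)$. Then there are isomorphisms of algebraic groups (i) $\operatorname{Aut}(A')\cong \mathbb{G}_a^2\rtimes \mathrm{GL}_2$, and (ii) $\operatorname{Aut}(A)\cong \mathbb{G}_a^2\rtimes(\operatorname{Aut}(A')\times\mathbb{G}_m)$, where $\mathbb{G}_m$ acts on this $\mathbb{G}_a^2$ by scalar multiplication, the normal subgroup $\mathbb{G}_a^2\le\operatorname{Aut}(A')$ from (i) acts trivially on it, and $\mathrm{GL}_2\le \operatorname{Aut}(A')$ acts on it by first applying the homomorphism $\mathrm{GL}_2\to\mathrm{SL}_2$, $M=\begin{pmatrix}\alpha&\beta\\ \gamma&\delta\end{pmatrix}\mapsto(\det M)^{-1}\begin{pmatrix}\alpha^2&\beta^2\\ \gamma^2&\delta^2\end{pmatrix}$, and then right multiplication on row vectors in $\mathbb{G}_a^2$.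
   Context: The complete quadrilateral is the partial linear space with $6$ points $a,b,c,x,y,z$ and $4$ lines $\{a,b,c\}$, $\{a,y,z\}$, $\{b,x,z\}$, $\{c,x,y\}$ (the Fischer space of $\mathrm{Sym}(4)$). For distinct collinear points $p,q$ (written $p\sim q$), $p\wedge q$ is the third point of their line. The nilpotent Matsuo algebra $A=M_k(\mathcal{G},1)$ is the commutative $k$-algebra with basis the points and bilinear product $p\cdot q=0$ if $p=q$ or $p\not\sim q$, and $p\cdot q=p+q+p\wedge q$ if $p\sim q$. $\operatorname{Ann}(A)=\{v\in A: vw=0\ \forall w\in A\}$ and $A'=A/\operatorname{Ann}(A)$ with induced product. $\operatorname{Aut}(A)$, $\operatorname{Aut}(A')$ denote the automorphism group schemes, viewed as functors from commutative $k$-algebras to groups. *)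

From HB Require Import structures.
From mathcomp Require Import all_boot all_order all_algebra.
Set Implicit Arguments. Unset Strict Implicit. Unset Printing Implicit Defensive.
Import Order.TTheory GRing.Theory Num.Theory.
Local Open Scope ring_scope.

Definition pa : 'I_6 := inord 0.
Definition pb : 'I_6 := inord 1.
Definition pc : 'I_6 := inord 2.
Definition px : 'I_6 := inord 3.
Definition py : 'I_6 := inord 4.
Definition pz : 'I_6 := inord 5.

Definition cq_lines : seq {set 'I_6} :=
  [:: [set pa; pb; pc]; [set pa; py; pz]; [set pb; px; pz]; [set pc; px; py]].

Definition cq_coll (p q : 'I_6) : bool :=
  (p != q) && has (fun L : {set 'I_6} => (p \in L) && (q \in L)) cq_lines.

(* p /\ q : the third point of the line through p and q (default p) *)
Definition cq_wedge (p q : 'I_6) : 'I_6 :=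
  odflt p [pick r | [&& r != p, r != q &
     has (fun L : {set 'I_6} => [&& p \in L, q \in L & r \in L]) cq_lines]].

Definition erow (R : nzRingType) (n : nat) (i : 'I_n) : 'rV[R]_n := delta_mx 0 i.

Definition scmul (R : nzRingType) (n : nat) (sc : 'I_n -> 'I_n -> 'rV[R]_n)
  (u v : 'rV[R]_n) : 'rV[R]_n :=
  \sum_(i < n) \sum_(j < n) (u 0 i * v 0 j) *: sc i j.

(* base change of k-structure constants to a k-algebra R *)
Definition bc (k : fieldType) (R : comUnitAlgType k) (n : nat)
  (sc : 'I_n -> 'I_n -> 'rV[k]_n) : 'I_n -> 'I_n -> 'rV[R]_n :=
  fun i j => map_mx (in_alg R) (sc i j).

(* R-points of the automorphism group scheme: invertible R-linear maps
   (acting on row vectors on the right) preserving the product. *)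
Definition is_aut (R : comUnitRingType) (n : nat) (sc : 'I_n -> 'I_n -> 'rV[R]_n)
  (g : 'M[R]_n) : Prop :=
  g \in unitmx /\
  forall u v : 'rV[R]_n, scmul sc (u *m g) (v *m g) = scmul sc u v *m g.

(* p.q = 0 if p = q or p not~ q ;  p.q = p + q + p/\q if p ~ q.
   The structure constants are integers, so A (x)_k R has the same ones. *)
Definition matsuo_sc (R : nzRingType) (p q : 'I_6) : 'rV[R]_6 :=
  if cq_coll p q then erow R p + erow R q + erow R (cq_wedge p q) else 0.

Definition mulA (R : nzRingType) (u v : 'rV[R]_6) : 'rV[R]_6 :=
  scmul (matsuo_sc R) u v.

Definition in_annA (k : fieldType) (v : 'rV[k]_6) : Prop :=
  forall w : 'rV[k]_6, mulA v w = 0.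

(* (k^n', sc') is a model of A' = A/Ann(A), with quotient map v |-> v *m P:
   P is surjective, its kernel is exactly Ann(A), and it is multiplicative
   (so sc' is the induced product). *)
Definition ann_quotient_model (k : fieldType) (n' : nat)
  (sc' : 'I_n' -> 'I_n' -> 'rV[k]_n') (P : 'M[k]_(6, n')) : Prop :=
  [/\ row_full P,
      (forall v : 'rV[k]_6, v *m P = 0 <-> in_annA v) &
      (forall u v : 'rV[k]_6, mulA u v *m P = scmul sc' (u *m P) (v *m P))].

(* X R carries the group GX R (a subset, with law mX R), similarly Y;
   fX, fY are the functorial actions of k-algebra morphisms.
   phi is a natural transformation that is a group isomorphism for every R. *)
Definition group_functor_iso (k : fieldType)
  (X Y : comUnitAlgType k -> Type)
  (GX : forall R, X R -> Prop) (GY : forall R, Y R -> Prop)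
  (mX : forall R, X R -> X R -> X R) (mY : forall R, Y R -> Y R -> Y R)
  (fX : forall (R S : comUnitAlgType k), {lrmorphism R -> S} -> X R -> X S)
  (fY : forall (R S : comUnitAlgType k), {lrmorphism R -> S} -> Y R -> Y S)
  (phi : forall R, X R -> Y R) : Prop :=
  [/\ (forall (R : comUnitAlgType k) x, GX R x -> GY R (phi R x)),
      (forall (R : comUnitAlgType k) x y, GX R x -> GX R y ->
          phi R (mX R x y) = mY R (phi R x) (phi R y)),
      (forall (R : comUnitAlgType k) x y, GX R x -> GX R y -> phi R x = phi R y -> x = y),
      (forall (R : comUnitAlgType k) y, GY R y -> exists2 x, GX R x & phi R x = y) &
      (forall (R S : comUnitAlgType k) (f : {lrmorphism R -> S}) x, GX R x ->
          phi S (fX R S f x) = fY R S f (phi R x))].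

Definition GL2_right_action (k : fieldType)
  (rho : forall R : comUnitAlgType k, 'M[R]_2 -> 'rV[R]_2 -> 'rV[R]_2) : Prop :=
  [/\ (forall (R : comUnitAlgType k) (M : 'M[R]_2) v w, M \in unitmx ->
          rho R M (v + w) = rho R M v + rho R M w),
      (forall (R : comUnitAlgType k) (M M' : 'M[R]_2) v, M \in unitmx -> M' \in unitmx ->
          rho R (M *m M') v = rho R M' (rho R M v)),
      (forall (R : comUnitAlgType k) (v : 'rV[R]_2), rho R 1%:M v = v) &
      (forall (R S : comUnitAlgType k) (f : {lrmorphism R -> S}) (M : 'M[R]_2) v, M \in unitmx ->
          map_mx f (rho R M v) = rho S (map_mx f M) (map_mx f v))].

(* semidirect product G_a^2 x| H for a right action act of H on G_a^2:
   (v,h)(v',h') = (act h' v + v', h h') *)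
Definition sdmul (R : nzRingType) (H : Type) (hmul : H -> H -> H)
  (act : H -> 'rV[R]_2 -> 'rV[R]_2) (y y' : 'rV[R]_2 * H) : 'rV[R]_2 * H :=
  (act y'.2 y.1 + y'.1, hmul y.2 y'.2).

Definition twist (R : comUnitRingType) (M : 'M[R]_2) : 'M[R]_2 :=
  (\det M)^-1 *: map_mx (fun e => e ^+ 2) M.

From Pilot Require Import Defs.
From HB Require Import structures.
From mathcomp Require Import all_boot all_order all_algebra.
From mathcomp Require Import ring.
Set Implicit Arguments. Unset Strict Implicit. Unset Printing Implicit Defensive.
Import Order.TTheory GRing.Theory Num.Theory.
Local Open Scope ring_scope.

(* In characteristic 2, A has the basis e0 = a, e1 = b, e2 = ab = a + b + c,
   e3 = b + c + y + z, e4 = a + c + x + z, e5 = a + b + c + x + y + z, in which e5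
   spans Ann(A) and the only nonzero products of basis vectors are
   e0 e1 = e2, e0 e4 = e2 e3 = e3 and e1 e3 = e2 e4 = e4.  An automorphism of A'
   preserves A' > A'^2 = <e2, e3, e4> > A'^3 = <e3, e4>, hence acts on A'^3 by some
   G in GL_2 and sends e2 to e2 + z with z in A'^3; the products then force its
   action on e0, e1 to be twist G, so that g |-> (z, G) is an isomorphism onto
   G_a^2 x| GL_2, the inverse being built explicitly.  An automorphism of A is an
   automorphism b of A' together with the scaling t of e5 and the e5-components f
   of the images of e0, e1.  The vector f is only a cocycle, but w = f J T, with
   J the swap matrix and T = twist G, is a homomorphism into a semidirect product
   because T^T J T = det T J = J in characteristic 2. *)

(** * Algebras given by structure constants *)

Section StructureConstants.
Variable R : comUnitRingType.

Lemma scmul_delta n (sc : 'I_n -> 'I_n -> 'rV[R]_n) i j :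
  scmul sc (delta_mx 0 i) (delta_mx 0 j) = sc i j.
Proof.
rewrite /scmul (bigD1 i) //= [X in _ + X]big1 => [|k nki]; last first.
  by apply: big1 => l _; rewrite !mxE (negbTE nki) andbF mul0r scale0r.
rewrite addr0 (bigD1 j) //= [X in _ + X]big1 => [|l nlj]; last first.
  by rewrite !mxE (negbTE nlj) andbF mulr0 scale0r.
by rewrite addr0 !mxE !eqxx mulr1 scale1r.
Qed.

Lemma scmul_mulmx m n (sc : 'I_n -> 'I_n -> 'rV[R]_n) (L : 'M[R]_(m, n)) u v :
  scmul sc (u *m L) (v *m L) =
  \sum_(k < m) \sum_(l < m) (u 0 k * v 0 l) *: scmul sc (row k L) (row l L).
Proof.
rewrite /scmul.
transitivity (\sum_(k < m) \sum_(l < m) \sum_(i < n) \sum_(j < n)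
                (u 0 k * v 0 l * (L k i * L l j)) *: sc i j); last first.
  apply: eq_bigr => k _; apply: eq_bigr => l _; rewrite scaler_sumr.
  by apply: eq_bigr => i _; rewrite scaler_sumr; apply: eq_bigr => j _; rewrite scalerA !mxE.
symmetry; under eq_bigr => k _ do rewrite exchange_big /=.
rewrite exchange_big; apply: eq_bigr => i _ /=.
under eq_bigr => k _ do rewrite exchange_big /=.
rewrite exchange_big; apply: eq_bigr => j _ /=.
rewrite !mxE big_distrlr scaler_suml; apply: eq_bigr => k _.
by rewrite scaler_suml; apply: eq_bigr => l _; rewrite mulrACA.
Qed.

Lemma scmul_mulmx_basis a b (sc1 : 'I_a -> 'I_a -> 'rV[R]_a)
    (sc2 : 'I_b -> 'I_b -> 'rV[R]_b) (L : 'M[R]_(a, b)) :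
  (forall i j, scmul sc2 (row i L) (row j L) = sc1 i j *m L) ->
  forall u v, scmul sc2 (u *m L) (v *m L) = scmul sc1 u v *m L.
Proof.
move=> hL u v; rewrite scmul_mulmx [scmul sc1 u v]/scmul !mulmx_suml.
by apply: eq_bigr => k _; rewrite mulmx_suml; apply: eq_bigr => l _; rewrite hL scalemxAl.
Qed.

Lemma scmul_bilinear n (m : 'rV[R]_n -> 'rV[R]_n -> 'rV[R]_n) :
  (forall v, linear (m^~ v)) -> (forall u, linear (m u)) ->
  forall u v, scmul (fun i j => m (delta_mx 0 i) (delta_mx 0 j)) u v = m u v.
Proof.
have lin_sum (f : 'rV[R]_n -> 'rV[R]_n) (a : 'I_n -> R) : linear f ->
    f (\sum_i a i *: delta_mx 0 i) = \sum_i a i *: f (delta_mx 0 i).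
  move=> fL; have f0 : f 0 = 0.
    by apply: (addIr (f 0)); rewrite add0r -{1}[f 0]scale1r -fL scale1r addr0.
  by elim/big_rec2: _ => // i x y _ <-; rewrite fL.
move=> mlL mrL u v; rewrite /scmul.
transitivity (\sum_i u 0 i *: m (delta_mx 0 i) v); last first.
  by rewrite -(lin_sum (m^~ v)) // -row_sum_delta.
apply: eq_bigr => i _; rewrite [v in RHS]row_sum_delta lin_sum // scaler_sumr.
by apply: eq_bigr => j _; rewrite scalerA.
Qed.

Lemma is_aut_mul n (sc : 'I_n -> 'I_n -> 'rV[R]_n) (g h : 'M[R]_n) :
  is_aut sc g -> is_aut sc h -> is_aut sc (g *m h).
Proof.
case=> gU hg [hU hh]; split; first by rewrite unitmx_mul gU.
by move=> u v; rewrite !mulmxA hh hg.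
Qed.

Lemma is_aut_inv n (sc : 'I_n -> 'I_n -> 'rV[R]_n) (g : 'M[R]_n) :
  is_aut sc g -> is_aut sc (invmx g).
Proof.
case=> gU hg; split=> [|u v]; first by rewrite unitmx_inv.
by apply: (can_inj (mulmxK gU)); rewrite -hg !mulmxKV.
Qed.

Lemma scmul_mulmx_inv a b (sc1 : 'I_a -> 'I_a -> 'rV[R]_a)
    (sc2 : 'I_b -> 'I_b -> 'rV[R]_b) (L : 'M[R]_(a, b)) (L' : 'M[R]_(b, a)) :
  L *m L' = 1%:M -> L' *m L = 1%:M ->
  (forall u v, scmul sc2 (u *m L) (v *m L) = scmul sc1 u v *m L) ->
  forall x y, scmul sc1 (x *m L') (y *m L') = scmul sc2 x y *m L'.
Proof.
move=> LL' L'L hL x y.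
have LK : cancel (fun z : 'rV[R]_a => z *m L) (fun z => z *m L').
  by move=> z; rewrite -mulmxA LL' mulmx1.
by apply: (can_inj LK); rewrite /= -hL -!mulmxA L'L !mulmx1.
Qed.

Lemma is_aut_conjW a b (sc1 : 'I_a -> 'I_a -> 'rV[R]_a) (sc2 : 'I_b -> 'I_b -> 'rV[R]_b)
    (L : 'M[R]_(a, b)) (L' : 'M[R]_(b, a)) :
  L *m L' = 1%:M -> L' *m L = 1%:M ->
  (forall u v, scmul sc2 (u *m L) (v *m L) = scmul sc1 u v *m L) ->
  forall h, is_aut sc2 h -> is_aut sc1 (L *m h *m L').
Proof.
move=> LL' L'L hL h [hU hh]; split=> [|u v].
  suff /mulmx1_unit[] : L *m h *m L' *m (L *m invmx h *m L') = 1%:M by [].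
  by rewrite -!mulmxA (mulmxA L') L'L mul1mx (mulmxA h) mulmxV // mul1mx.
by rewrite !mulmxA (scmul_mulmx_inv LL' L'L hL) hh hL.
Qed.

Lemma is_aut_conj a b (sc1 : 'I_a -> 'I_a -> 'rV[R]_a) (sc2 : 'I_b -> 'I_b -> 'rV[R]_b)
    (L : 'M[R]_(a, b)) (L' : 'M[R]_(b, a)) :
  L *m L' = 1%:M -> L' *m L = 1%:M ->
  (forall u v, scmul sc2 (u *m L) (v *m L) = scmul sc1 u v *m L) ->
  forall h, is_aut sc2 h <-> is_aut sc1 (L *m h *m L').
Proof.
move=> LL' L'L hL h; split; first exact: is_aut_conjW.
move/(is_aut_conjW L'L LL' (scmul_mulmx_inv LL' L'L hL)).
by rewrite !mulmxA L'L mul1mx -mulmxA L'L mulmx1.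
Qed.

End StructureConstants.

Lemma map_scmul (aR rR : comUnitRingType) (f : {rmorphism aR -> rR}) n
    (sc : 'I_n -> 'I_n -> 'rV[aR]_n) (u v : 'rV[aR]_n) :
  map_mx f (scmul sc u v) =
  scmul (fun i j => map_mx f (sc i j)) (map_mx f u) (map_mx f v).
Proof.
apply/rowP => k; rewrite /scmul !mxE !summxE rmorph_sum; apply: eq_bigr => i _.
rewrite !summxE rmorph_sum; apply: eq_bigr => j _.
by rewrite !mxE !rmorphM.
Qed.

Lemma mulmx_ker_factor (R : comUnitRingType) m n p (A : 'M[R]_(m, n)) (C : 'M[R]_(n, m))
    (B : 'M[R]_(m, p)) :
  C *m A = 1%:M -> (forall v : 'rV[R]_m, v *m A = 0 -> v *m B = 0) -> A *m C *m B = B.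
Proof.
move=> CA kerAB; apply/row_matrixP => i; rewrite !rowE !mulmxA.
by apply/eqP; rewrite -subr_eq0 -mulmxBl kerAB ?eqxx // mulmxBl -!mulmxA CA mulmx1 subrr.
Qed.

Lemma map_mx_in_alg (k : fieldType) (R S : comUnitAlgType k) (f : {lrmorphism R -> S}) m n
    (A : 'M[k]_(m, n)) :
  map_mx f (map_mx (in_alg R) A) = map_mx (in_alg S) A.
Proof. by apply/matrixP => i j; rewrite !mxE !in_algE rmorph_alg. Qed.

Section GroupFunctorIso.
Variable k : fieldType.
Implicit Types R S : comUnitAlgType k.

Lemma group_functor_iso_comp (X Y Z : comUnitAlgType k -> Type)
    (GX : forall R, X R -> Prop) (GY : forall R, Y R -> Prop) (GZ : forall R, Z R -> Prop)
    (mX : forall R, X R -> X R -> X R) (mY : forall R, Y R -> Y R -> Y R)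
    (mZ : forall R, Z R -> Z R -> Z R)
    (fX : forall R S, {lrmorphism R -> S} -> X R -> X S)
    (fY : forall R S, {lrmorphism R -> S} -> Y R -> Y S)
    (fZ : forall R S, {lrmorphism R -> S} -> Z R -> Z S)
    (phi1 : forall R, X R -> Y R) (phi2 : forall R, Y R -> Z R) :
  group_functor_iso GX GY mX mY fX fY phi1 ->
  group_functor_iso GY GZ mY mZ fY fZ phi2 ->
  group_functor_iso GX GZ mX mZ fX fZ (fun R x => phi2 R (phi1 R x)).
Proof.
case=> G1 M1 I1 S1 N1 [G2 M2 I2 S2 N2].
split=> [R x gx | R x y gx gy | R x y gx gy | R z gz | R S f x gx].
- by apply: G2; apply: G1.
- by rewrite M1 // M2 //; apply: G1.
- by move/(I2 _ _ _ (G1 _ _ gx) (G1 _ _ gy)); apply: I1.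
- have [y gy <-] := S2 _ _ gz; have [x gx <-] := S1 _ _ gy.
  by exists x.
- by rewrite N1 // N2 //; apply: G1.
Qed.

Lemma conj_group_functor_iso a b
    (sc1 : forall R, 'I_a -> 'I_a -> 'rV[R]_a) (sc2 : forall R, 'I_b -> 'I_b -> 'rV[R]_b)
    (L : forall R, 'M[R]_(a, b)) (L' : forall R, 'M[R]_(b, a)) :
  (forall R, L R *m L' R = 1%:M) -> (forall R, L' R *m L R = 1%:M) ->
  (forall R u v, scmul (sc2 R) (u *m L R) (v *m L R) = scmul (sc1 R) u v *m L R) ->
  (forall R S (f : {lrmorphism R -> S}), map_mx f (L R) = L S) ->
  (forall R S (f : {lrmorphism R -> S}), map_mx f (L' R) = L' S) ->
  @group_functor_iso k (fun R => 'M[R]_b) (fun R => 'M[R]_a)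
    (fun R g => is_aut (sc2 R) g) (fun R g => is_aut (sc1 R) g)
    (fun R g h => g *m h) (fun R g h => g *m h)
    (fun R S f g => map_mx f g) (fun R S f g => map_mx f g)
    (fun R g => L R *m g *m L' R).
Proof.
move=> LL' L'L hL fL fL'.
have conjK R (g : 'M[R]_b) : L' R *m (L R *m g *m L' R) *m L R = g.
  by rewrite !mulmxA L'L mul1mx -mulmxA L'L mulmx1.
split=> [R g | R g h _ _ | R g h _ _ | R g | R S f g _].
- by move/(is_aut_conj (LL' R) (L'L R) (hL R)).
- by rewrite -!mulmxA (mulmxA (L' R)) L'L mul1mx.
- by move=> e; rewrite -[g]conjK -[h]conjK e.
- have e : L R *m (L' R *m g *m L R) *m L' R = g.
    by rewrite !mulmxA LL' mul1mx -mulmxA LL' mulmx1.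
  by exists (L' R *m g *m L R) => //; apply/(is_aut_conj (LL' R) (L'L R) (hL R)); rewrite e.
- by rewrite !map_mxM fL fL'.
Qed.

End GroupFunctorIso.

(** * Characteristic 2 *)

Lemma char2_natr (R : nzRingType) (n : nat) : 2%:R = 0 :> R -> ~~ odd n -> n%:R = 0 :> R.
Proof. by move=> h2 /even_halfK <-; rewrite -mul2n natrM h2 mul0r. Qed.

Lemma char2_oppr_natr (R : nzRingType) (n : nat) :
  2%:R = 0 :> R -> ~~ odd n -> - n%:R = 0 :> R.
Proof. by move=> h2 /(char2_natr h2) ->; rewrite oppr0. Qed.

(* [ring: e] uses an equation [c = 0], [c] a constant, only to cancel coefficients
   equal to [c]; so the goal is put in the form [x - y = 0], whose coefficients are
   all even, and every even constant that occurs below is supplied. *)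
Ltac char2_ring_with h2 e :=
  apply: subr0_eq;
  ring: (@char2_natr _ 2 h2 isT) (@char2_natr _ 4 h2 isT) (@char2_natr _ 6 h2 isT)
        (@char2_natr _ 8 h2 isT) (@char2_natr _ 10 h2 isT) (@char2_natr _ 12 h2 isT)
        (@char2_oppr_natr _ 2 h2 isT) (@char2_oppr_natr _ 4 h2 isT)
        (@char2_oppr_natr _ 6 h2 isT) (@char2_oppr_natr _ 8 h2 isT)
        (@char2_oppr_natr _ 10 h2 isT) (@char2_oppr_natr _ 12 h2 isT) e.

Ltac char2_ring h2 := char2_ring_with h2 (@char2_natr _ 2 h2 isT).

Lemma char2_alg (k : fieldType) (R : comUnitAlgType k) : 2 \in [pchar k] -> 2%:R = 0 :> R.
Proof. by move=> hk; rewrite -(rmorph_nat (in_alg R)) (pcharf0 hk) rmorph0. Qed.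

(** * A model of A' *)

Definition j0 : 'I_2 := @Ordinal 2 0 isT.
Definition j1 : 'I_2 := @Ordinal 2 1 isT.
Definition q0 : 'I_5 := @Ordinal 5 0 isT.
Definition q1 : 'I_5 := @Ordinal 5 1 isT.
Definition q2 : 'I_5 := @Ordinal 5 2 isT.
Definition q3 : 'I_5 := @Ordinal 5 3 isT.
Definition q4 : 'I_5 := @Ordinal 5 4 isT.

Lemma ord2_cases (P : 'I_2 -> Prop) : P j0 -> P j1 -> forall i, P i.
Proof.
by move=> ? ? [[|[|//]] i]; [rewrite (_ : Ordinal i = j0) | rewrite (_ : Ordinal i = j1)];
  try apply: val_inj.
Qed.

Lemma ord5_cases (P : 'I_5 -> Prop) :
  P q0 -> P q1 -> P q2 -> P q3 -> P q4 -> forall i, P i.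
Proof.
by move=> ? ? ? ? ? [[|[|[|[|[|//]]]]] i];
  [rewrite (_ : Ordinal i = q0) | rewrite (_ : Ordinal i = q1) | rewrite (_ : Ordinal i = q2)
  | rewrite (_ : Ordinal i = q3) | rewrite (_ : Ordinal i = q4)]; try apply: val_inj.
Qed.

Lemma sum_ord2 (V : nmodType) (F : 'I_2 -> V) : \sum_(i < 2) F i = F j0 + F j1.
Proof.
by rewrite !big_ord_recr big_ord0 /= add0r; congr (F _ + F _); apply: val_inj.
Qed.

Lemma sum_ord5 (V : nmodType) (F : 'I_5 -> V) :
  \sum_(i < 5) F i = F q0 + F q1 + F q2 + F q3 + F q4.
Proof.
rewrite !big_ord_recr big_ord0 /= add0r.
by congr (F _ + F _ + F _ + F _ + F _); apply: val_inj.
Qed.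

Lemma det_mx2 (R : comUnitRingType) (G : 'M[R]_2) :
  \det G = G j0 j0 * G j1 j1 - G j0 j1 * G j1 j0.
Proof.
rewrite (expand_det_row _ j0) sum_ord2 /cofactor !det_mx11 !mxE /=.
have -> : lift j0 0 = j1 by apply: val_inj.
have -> : lift j1 0 = j0 by apply: val_inj.
by rewrite expr0 expr1; ring.
Qed.

Lemma det_invE (R : comUnitRingType) (G : 'M[R]_2) : G \in unitmx ->
  (\det G)^-1 * G j0 j0 * G j1 j1 = 1 + (\det G)^-1 * G j0 j1 * G j1 j0.
Proof. by rewrite unitmxE => /mulVr dV; rewrite -[X in X + _]dV det_mx2; ring. Qed.

Definition mul5 (R : comUnitRingType) (u v : 'rV[R]_5) : 'rV[R]_5 :=
  \row_(k < 5) match val k with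
   | 2 => u 0 q0 * v 0 q1 + u 0 q1 * v 0 q0
   | 3 => u 0 q0 * v 0 q4 + u 0 q4 * v 0 q0 + u 0 q2 * v 0 q3 + u 0 q3 * v 0 q2
   | 4 => u 0 q1 * v 0 q3 + u 0 q3 * v 0 q1 + u 0 q2 * v 0 q4 + u 0 q4 * v 0 q2
   | _ => 0 end.

Definition mul5_table (R : comUnitRingType) (i j : 'I_5) : 'rV[R]_5 :=
  match val i, val j with
  | 0, 1 | 1, 0 => erow R q2 | 0, 4 | 4, 0 | 2, 3 | 3, 2 => erow R q3
  | 1, 3 | 3, 1 | 2, 4 | 4, 2 => erow R q4 | _, _ => 0 end.

Lemma mul5_erow (R : comUnitRingType) i j : mul5 (erow R i) (erow R j) = mul5_table R i j.
Proof.
apply/rowP => k; rewrite !mxE; move: i j k; do 3!apply: ord5_cases;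
  by rewrite /mul5_table /= ?mxE ?(mul0r, mulr0, mul1r, add0r, addr0).
Qed.

Definition sc5 (R : comUnitRingType) (i j : 'I_5) : 'rV[R]_5 := mul5 (erow R i) (erow R j).

Lemma mul5_linearl (R : comUnitRingType) (v : 'rV[R]_5) : linear (fun u => mul5 u v).
Proof. by move=> a x y; apply/rowP; apply: ord5_cases; rewrite !mxE /=; ring. Qed.

Lemma mul5_linearr (R : comUnitRingType) (u : 'rV[R]_5) : linear (mul5 u).
Proof. by move=> a x y; apply/rowP; apply: ord5_cases; rewrite !mxE /=; ring. Qed.

Lemma scmul_sc5 (R : comUnitRingType) (u v : 'rV[R]_5) : scmul (sc5 R) u v = mul5 u v.
Proof. exact: (scmul_bilinear (@mul5_linearl R) (@mul5_linearr R)). Qed.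

Lemma mul5_0l (R : comUnitRingType) (v : 'rV[R]_5) : mul5 0 v = 0.
Proof. by apply/rowP; apply: ord5_cases; rewrite !mxE /= ?mul0r ?add0r. Qed.

Lemma mul5_ann_free (R : comUnitRingType) (x : 'rV[R]_5) :
  (forall j, mul5 x (erow R j) = 0) -> x = 0.
Proof.
move=> hx; have c j k : mul5 x (erow R j) 0 k = 0 by rewrite hx mxE.
move: (c q1 q2) (c q0 q2) (c q3 q3) (c q2 q3) (c q2 q4).
rewrite !mxE /= ?(mul0r, mulr0, mul1r, mulr1, add0r, addr0) => x0 x1 x2 x3 x4.
by apply/rowP; apply: ord5_cases; rewrite mxE.
Qed.

Section Model5.
Variable R : comUnitRingType.
Hypothesis h2 : 2%:R = 0 :> R.

Definition mulmorph5 (g : 'M[R]_5) :=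
  forall u v, mul5 (u *m g) (v *m g) = mul5 u v *m g.

Lemma is_aut5P g : is_aut (sc5 R) g <-> g \in unitmx /\ mulmorph5 g.
Proof.
rewrite /is_aut /mulmorph5.
by split=> -[gU hg]; split=> // u v; move: (hg u v); rewrite !scmul_sc5.
Qed.

Lemma mulmorph5_basis g :
  (forall i j, mul5 (row i g) (row j g) = mul5 (erow R i) (erow R j) *m g) -> mulmorph5 g.
Proof.
move=> hg u v; rewrite -!scmul_sc5; apply: scmul_mulmx_basis => i j.
by rewrite !scmul_sc5 hg.
Qed.

Lemma mulmorph5_coord g : mulmorph5 g ->
  forall i j k, mul5 (row i g) (row j g) 0 k = (mul5 (erow R i) (erow R j) *m g) 0 k.
Proof. by move=> hg i j k; rewrite !rowE hg. Qed.

Lemma mulmorph5_mul g h : mulmorph5 g -> mulmorph5 h -> mulmorph5 (g *m h).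
Proof. by move=> hg hh u v; rewrite !mulmxA hh hg. Qed.

Definition filtered5 (g : 'M[R]_5) : Prop :=
  [/\ g q2 q0 = 0, g q2 q1 = 0, g q3 q0 = 0, g q3 q1 = 0 &
      [/\ g q3 q2 = 0, g q4 q0 = 0, g q4 q1 = 0 & g q4 q2 = 0]].

Definition m5 (j : 'I_2) : 'I_5 := if val j == 0%N then q3 else q4.
Definition zpart (g : 'M[R]_5) : 'rV[R]_2 := \row_j g q2 (m5 j).
Definition Gpart (g : 'M[R]_5) : 'M[R]_2 := \matrix_(i, j) g (m5 i) (m5 j).

Ltac coord5 hg i j k := have := mulmorph5_coord hg i j k;
  rewrite mul5_erow /mul5_table /= ?mul0mx /erow -?rowE !mxE /=
    ?(mul0r, mulr0, mul1r, mulr1, add0r, addr0).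

Lemma mulmorph5_filtered g : mulmorph5 g -> filtered5 g.
Proof.
move=> hg.
coord5 hg q0 q1 q0 => /esym z20; coord5 hg q0 q1 q1 => /esym z21.
coord5 hg q0 q4 q0 => /esym z30; coord5 hg q0 q4 q1 => /esym z31.
coord5 hg q1 q3 q0 => /esym z40; coord5 hg q1 q3 q1 => /esym z41.
coord5 hg q0 q4 q2; rewrite z40 z41 !mulr0 addr0 => /esym z32.
coord5 hg q1 q3 q2; rewrite z30 z31 !mulr0 addr0 => /esym z42.
by [].
Qed.

Lemma filtered5_Gpart_mul g h : filtered5 g -> Gpart (g *m h) = Gpart g *m Gpart h.
Proof.
case=> _ _ z30 z31 [z32 z40 z41 z42].
apply/matrixP; do 2!apply: ord2_cases;
  by rewrite !mxE sum_ord5 sum_ord2 !mxE /m5 /= ?z30 ?z31 ?z32 ?z40 ?z41 ?z42; ring.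
Qed.

Lemma filtered5_zpart_mul g h : filtered5 g -> g q2 q2 = 1 ->
  zpart (g *m h) = zpart g *m Gpart h + zpart h.
Proof.
case=> z20 z21 _ _ _ g22; apply/rowP; apply: ord2_cases;
  by rewrite !mxE sum_ord5 sum_ord2 !mxE /m5 /= z20 z21 g22; ring.
Qed.

Lemma Gpart1 : Gpart 1%:M = 1%:M.
Proof. by apply/matrixP; do 2!apply: ord2_cases; rewrite !mxE /m5. Qed.

Lemma aut5_Gpart_unit g : is_aut (sc5 R) g -> Gpart g \in unitmx.
Proof.
move=> /[dup] /is_aut_inv /is_aut5P[_ _] /is_aut5P[gU /mulmorph5_filtered gF].
suff /mulmx1_unit[] : Gpart g *m Gpart (invmx g) = 1%:M by [].
by rewrite -filtered5_Gpart_mul // mulmxV // Gpart1.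
Qed.

Lemma mulmorph5_diag g : mulmorph5 g -> Gpart g \in unitmx -> g q2 q2 = 1.
Proof.
move=> hg GU; have [z20 z21 z30 z31 [z32 z40 z41 z42]] := mulmorph5_filtered hg.
coord5 hg q2 q3 q3; rewrite z20 z30 z32 !mul0r !mulr0 !add0r addr0 => e33.
coord5 hg q2 q3 q4; rewrite z21 z31 z32 !mul0r !mulr0 !add0r addr0 => e34.
coord5 hg q2 q4 q3; rewrite z20 z40 z42 !mul0r !mulr0 !add0r addr0 => e43.
coord5 hg q2 q4 q4; rewrite z21 z41 z42 !mul0r !mulr0 !add0r !addr0 => e44.
have : (g q2 q2 - 1) *: Gpart g = 0.
  apply/matrixP; do 2!apply: ord2_cases;
    by rewrite !mxE /m5 /= mulrBl mul1r ?e33 ?e34 ?e43 ?e44 subrr.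
move/(congr1 (mulmx^~ (invmx (Gpart g)))).
rewrite -scalemxAl mulmxV // mul0mx scalemx1 => /matrixP/(_ j0 j0).
by rewrite !mxE eqxx mulr1n => /eqP; rewrite subr_eq0 => /eqP.
Qed.

Lemma mulmorph5_eq1 g : mulmorph5 g -> zpart g = 0 -> Gpart g = 1%:M -> g = 1%:M.
Proof.
move=> hg z0 G1; have g22 : g q2 q2 = 1 by apply: mulmorph5_diag; rewrite // G1 unitmx1.
have [z20 z21 z30 z31 [z32 z40 z41 z42]] := mulmorph5_filtered hg.
move/rowP: z0 => z0; move/matrixP: G1 => G1.
move: (z0 j0) (z0 j1) (G1 j0 j0) (G1 j0 j1) (G1 j1 j0) (G1 j1 j1).
rewrite !mxE /m5 /= => g23 g24 g33 g34 g43 g44.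
have simp0 := (mul0r, mulr0, mul1r, mulr1, add0r, addr0).
have rows := (z20, z21, g22, g23, g24, z30, z31, z32, g33, g34, z40, z41, z42, g43, g44).
coord5 hg q0 q4 q3; rewrite !rows ?simp0 => g00.
coord5 hg q0 q3 q4; rewrite !rows ?simp0 => g01.
coord5 hg q0 q3 q3; rewrite !rows ?simp0 => g02.
coord5 hg q0 q2 q3; rewrite !rows ?simp0 => g03.
coord5 hg q0 q2 q4; rewrite !rows ?simp0 => g04.
coord5 hg q1 q4 q3; rewrite !rows ?simp0 => g10.
coord5 hg q1 q3 q4; rewrite !rows ?simp0 => g11.
coord5 hg q1 q3 q3; rewrite !rows ?simp0 => g12.
coord5 hg q1 q2 q3; rewrite !rows ?simp0 => g13.
coord5 hg q1 q2 q4; rewrite !rows ?simp0 => g14.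
have rows01 := (g00, g01, g02, g03, g04, g10, g11, g12, g13, g14).
by apply/matrixP; do 2!apply: ord5_cases; rewrite !mxE ?rows ?rows01.
Qed.

Definition aut5_entry (z : 'rV[R]_2) (G : 'M[R]_2) (i j : nat) : R :=
  let e := (\det G)^-1 in
  match i, j with
  | 0, 0 => e * G j0 j0 ^+ 2 | 0, 1 => e * G j0 j1 ^+ 2 | 0, 2 => e * G j0 j0 * G j0 j1
  | 0, 3 => e * G j0 j0 ^+ 2 * z 0 j1 + e * G j0 j0 * G j0 j1 * z 0 j0
  | 0, 4 => e * G j0 j1 ^+ 2 * z 0 j0 + e * G j0 j0 * G j0 j1 * z 0 j1
  | 1, 0 => e * G j1 j0 ^+ 2 | 1, 1 => e * G j1 j1 ^+ 2 | 1, 2 => e * G j1 j0 * G j1 j1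
  | 1, 3 => e * G j1 j0 ^+ 2 * z 0 j1 + e * G j1 j0 * G j1 j1 * z 0 j0
  | 1, 4 => e * G j1 j1 ^+ 2 * z 0 j0 + e * G j1 j0 * G j1 j1 * z 0 j1
  | 2, 2 => 1 | 2, 3 => z 0 j0 | 2, 4 => z 0 j1
  | 3, 3 => G j0 j0 | 3, 4 => G j0 j1 | 4, 3 => G j1 j0 | 4, 4 => G j1 j1
  | _, _ => 0 end.

Definition aut5_of (z : 'rV[R]_2) (G : 'M[R]_2) : 'M[R]_5 :=
  \matrix_(i < 5, j < 5) aut5_entry z G i j.

Lemma zpart_aut5_of z G : zpart (aut5_of z G) = z.
Proof. by apply/rowP; apply: ord2_cases; rewrite !mxE. Qed.

Lemma Gpart_aut5_of z G : Gpart (aut5_of z G) = G.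
Proof. by apply/matrixP; do 2!apply: ord2_cases; rewrite !mxE. Qed.

Lemma aut5_of_mulmorph z G : G \in unitmx -> mulmorph5 (aut5_of z G).
Proof.
move=> /det_invE eD; apply: mulmorph5_basis => i j; apply/rowP => k.
rewrite !mxE sum_ord5 !mxE.
by move: i j k; do 3!apply: ord5_cases => /=; char2_ring_with h2 eD.
Qed.

Lemma aut5_of_aut z G : G \in unitmx -> is_aut (sc5 R) (aut5_of z G).
Proof.
move=> GU; have hg := aut5_of_mulmorph z GU.
apply/is_aut5P; split=> //.
pose h := aut5_of (- (z *m invmx G)) (invmx G).
have hh : mulmorph5 h by apply: aut5_of_mulmorph; rewrite unitmx_inv.
have gF := mulmorph5_filtered hg.
have g22 : aut5_of z G q2 q2 = 1 by apply: mulmorph5_diag; rewrite ?Gpart_aut5_of.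
suff /mulmx1_unit[] : aut5_of z G *m h = 1%:M by [].
apply: mulmorph5_eq1; first exact: mulmorph5_mul.
  by rewrite filtered5_zpart_mul // !zpart_aut5_of Gpart_aut5_of addrN.
by rewrite filtered5_Gpart_mul // !Gpart_aut5_of mulmxV.
Qed.

Lemma aut5_inj g h : is_aut (sc5 R) g -> is_aut (sc5 R) h ->
  zpart g = zpart h -> Gpart g = Gpart h -> g = h.
Proof.
move=> gA hA ez eG; have hU := aut5_Gpart_unit hA; have [hmU _] := hA.
set k := g *m invmx h; have gE : g = k *m h by rewrite /k mulmxKV.
have /is_aut5P[_ kM] := is_aut_mul gA (is_aut_inv hA); rewrite -/k in kM.
have kF := mulmorph5_filtered kM.
have kG : Gpart k = 1%:M.
  by apply: (can_inj (mulmxK hU)); rewrite /= mul1mx -filtered5_Gpart_mul // -gE eG.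
have k22 : k q2 q2 = 1 by apply: mulmorph5_diag; rewrite // kG unitmx1.
have kz : zpart k *m Gpart h = 0.
  by apply: (addIr (zpart h)); rewrite add0r -filtered5_zpart_mul // -gE ez.
by rewrite gE (mulmorph5_eq1 kM _ kG) ?mul1mx // -[zpart k](mulmxK hU) kz mul0mx.
Qed.

Lemma aut5E g : is_aut (sc5 R) g -> g = aut5_of (zpart g) (Gpart g).
Proof.
move=> gA; apply: aut5_inj => //; rewrite ?zpart_aut5_of ?Gpart_aut5_of //.
exact/aut5_of_aut/aut5_Gpart_unit.
Qed.

End Model5.

Lemma zpart_map (aR rR : comUnitRingType) (f : {rmorphism aR -> rR}) (g : 'M[aR]_5) :
  zpart (map_mx f g) = map_mx f (zpart g).
Proof. by apply/rowP => j; rewrite !mxE. Qed.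

Lemma Gpart_map (aR rR : comUnitRingType) (f : {rmorphism aR -> rR}) (g : 'M[aR]_5) :
  Gpart (map_mx f g) = map_mx f (Gpart g).
Proof. by apply/matrixP => i j; rewrite !mxE. Qed.

Lemma aut5_group_functor_iso (k : fieldType) : 2 \in [pchar k] ->
  @group_functor_iso k (fun R => 'M[R]_5) (fun R => ('rV[R]_2 * 'M[R]_2)%type)
    (fun R g => is_aut (sc5 R) g) (fun R y => y.2 \in unitmx)
    (fun R g h => g *m h) (fun R => sdmul (@mulmx R 2 2 2) (fun M v => v *m M))
    (fun R S f g => map_mx f g) (fun R S f y => (map_mx f y.1, map_mx f y.2))
    (fun R g => (zpart g, Gpart g)).
Proof.
move=> hk; split=> [R g | R g h gA hA | R g h gA hA [ez eG] | R [z G] /= GU | R S f g _].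
- exact: aut5_Gpart_unit.
- have /is_aut5P[_ /mulmorph5_filtered gF] := gA.
  have g22 : g q2 q2 = 1.
    by apply: mulmorph5_diag; [case/is_aut5P: gA | exact: aut5_Gpart_unit].
  by rewrite /sdmul /= filtered5_zpart_mul // filtered5_Gpart_mul.
- exact: aut5_inj.
- exists (aut5_of z G); first exact: (aut5_of_aut (char2_alg R hk)).
  by rewrite zpart_aut5_of Gpart_aut5_of.
- by rewrite zpart_map Gpart_map.
Qed.

(** * The complete quadrilateral *)

Definition o0 : 'I_6 := @Ordinal 6 0 isT.
Definition o1 : 'I_6 := @Ordinal 6 1 isT.
Definition o2 : 'I_6 := @Ordinal 6 2 isT.
Definition o3 : 'I_6 := @Ordinal 6 3 isT.
Definition o4 : 'I_6 := @Ordinal 6 4 isT.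
Definition o5 : 'I_6 := @Ordinal 6 5 isT.

Lemma ord6_cases (P : 'I_6 -> Prop) :
  P o0 -> P o1 -> P o2 -> P o3 -> P o4 -> P o5 -> forall i, P i.
Proof.
by move=> ? ? ? ? ? ? [[|[|[|[|[|[|//]]]]]] i];
  [rewrite (_ : Ordinal i = o0) | rewrite (_ : Ordinal i = o1) | rewrite (_ : Ordinal i = o2)
  | rewrite (_ : Ordinal i = o3) | rewrite (_ : Ordinal i = o4) | rewrite (_ : Ordinal i = o5)];
  try apply: val_inj.
Qed.

Lemma sum_ord6 (V : nmodType) (F : 'I_6 -> V) :
  \sum_(i < 6) F i = F o0 + F o1 + F o2 + F o3 + F o4 + F o5.
Proof.
rewrite !big_ord_recr big_ord0 /= add0r.
by congr (F _ + F _ + F _ + F _ + F _ + F _); apply: val_inj.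
Qed.

(* With a, b, c, x, y, z numbered 0, ..., 5, the non-collinear pairs of distinct
   points are the pairs {p, p + 3}, and the labels on a line add up to 3 or 9. *)
Definition cq_colln (i j : nat) : bool := (i != j) && ((i + 3) %% 6 != j)%N.

Definition cq_wedgen (i j : nat) : nat :=
  if ((i < 3) && (j < 3))%N then (3 - i - j)%N else (9 - i - j)%N.

Lemma cq_points : (pa, pb, pc, px, py, pz) = (o0, o1, o2, o3, o4, o5).
Proof. by congr (_, _, _, _, _, _); apply/val_inj; rewrite /= inordK. Qed.

Lemma cq_collE (i j : 'I_6) : cq_coll i j = cq_colln i j.
Proof.
rewrite /cq_coll /cq_lines; case: cq_points => -> -> -> -> -> ->; rewrite /= !inE.
by case: i => [[|[|[|[|[|[|//]]]]]] ?]; case: j => [[|[|[|[|[|[|//]]]]]] ?].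
Qed.

Lemma cq_wedgeE (i j : 'I_6) : cq_colln i j -> val (cq_wedge i j) = cq_wedgen i j.
Proof.
rewrite /cq_wedge /cq_lines; case: cq_points => -> -> -> -> -> ->.
case: pickP => [r /and3P[] | none] /=; rewrite ?inE.
  by case: i => [[|[|[|[|[|[|//]]]]]] ?]; case: j => [[|[|[|[|[|[|//]]]]]] ?];
     case: r => [[|[|[|[|[|[|//]]]]]] ?].
move: (none o0) (none o1) (none o2) (none o3) (none o4) (none o5); clear none.
rewrite /= !inE.
by case: i => [[|[|[|[|[|[|//]]]]]] ?]; case: j => [[|[|[|[|[|[|//]]]]]] ?].
Qed.

Definition line_mul (R : comUnitRingType) (u v : 'rV[R]_6) (p q r : 'I_6) : R :=
  u 0 p * v 0 q + u 0 q * v 0 p + u 0 p * v 0 r + u 0 r * v 0 p + u 0 q * v 0 r + u 0 r * v 0 q.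

Definition matsuo_mul (R : comUnitRingType) (u v : 'rV[R]_6) : 'rV[R]_6 :=
  \row_(r < 6) match val r with
  | 0 => line_mul u v o0 o1 o2 + line_mul u v o0 o4 o5
  | 1 => line_mul u v o0 o1 o2 + line_mul u v o1 o3 o5
  | 2 => line_mul u v o0 o1 o2 + line_mul u v o2 o3 o4
  | 3 => line_mul u v o1 o3 o5 + line_mul u v o2 o3 o4
  | 4 => line_mul u v o0 o4 o5 + line_mul u v o2 o3 o4
  | _ => line_mul u v o0 o4 o5 + line_mul u v o1 o3 o5 end.

Lemma matsuo_sc_entry (R : comUnitRingType) (i j r : 'I_6) : matsuo_sc R i j 0 r =
  if cq_colln i j then (i == r)%:R + (j == r)%:R + (cq_wedgen i j == val r)%:R else 0.
Proof.
rewrite /matsuo_sc cq_collE; case: ifP => [ij | _]; last by rewrite mxE.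
by rewrite -(cq_wedgeE ij) !mxE /= !(eq_sym r).
Qed.

Lemma scmul_matsuo (R : comUnitRingType) (u v : 'rV[R]_6) :
  scmul (matsuo_sc R) u v = matsuo_mul u v.
Proof.
apply/rowP => r; rewrite /scmul summxE sum_ord6.
rewrite !summxE !sum_ord6 !mxE !matsuo_sc_entry /line_mul.
by move: r; apply: ord6_cases => /=; ring.
Qed.

(** * A model of A and the quotient map onto A' *)

Definition emb5 (i : 'I_5) : 'I_6 :=
  match val i with 0 => o0 | 1 => o1 | 2 => o2 | 3 => o3 | _ => o4 end.

Definition restr5 (R : comUnitRingType) (u : 'rV[R]_6) : 'rV[R]_5 := \row_j u 0 (emb5 j).

Definition ext5 (R : comUnitRingType) (w : 'rV[R]_5) : 'rV[R]_6 :=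
  \row_(k < 6) match val k with
  | 0 => w 0 q0 | 1 => w 0 q1 | 2 => w 0 q2 | 3 => w 0 q3 | 4 => w 0 q4 | _ => 0 end.

Definition mul6 (R : comUnitRingType) (u v : 'rV[R]_6) : 'rV[R]_6 :=
  ext5 (mul5 (restr5 u) (restr5 v)).

Definition sc6 (R : comUnitRingType) (i j : 'I_6) : 'rV[R]_6 := mul6 (erow R i) (erow R j).

Lemma ext5K (R : comUnitRingType) : cancel (@ext5 R) (@restr5 R).
Proof. by move=> w; apply/rowP; apply: ord5_cases; rewrite !mxE. Qed.

Lemma restr5_linear (R : comUnitRingType) : linear (@restr5 R).
Proof. by move=> a x y; apply/rowP => j; rewrite !mxE. Qed.

Lemma ext5_linear (R : comUnitRingType) : linear (@ext5 R).
Proof. by move=> a x y; apply/rowP; apply: ord6_cases; rewrite !mxE /= ?mulr0 ?addr0. Qed.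

Lemma ext5_0 (R : comUnitRingType) : ext5 (0 : 'rV[R]_5) = 0.
Proof. by apply/rowP; apply: ord6_cases; rewrite !mxE. Qed.

Lemma restr5_0 (R : comUnitRingType) : restr5 (0 : 'rV[R]_6) = 0.
Proof. by apply/rowP => j; rewrite !mxE. Qed.

Lemma restr5_mul6 (R : comUnitRingType) (u v : 'rV[R]_6) :
  restr5 (mul6 u v) = mul5 (restr5 u) (restr5 v).
Proof. exact: ext5K. Qed.

Lemma scmul_sc6 (R : comUnitRingType) (u v : 'rV[R]_6) : scmul (sc6 R) u v = mul6 u v.
Proof.
apply: scmul_bilinear => [w a x y | w a x y]; rewrite /mul6 restr5_linear.
  by rewrite mul5_linearl ext5_linear.
by rewrite mul5_linearr ext5_linear.
Qed.

(* The rows of [Bm] are e0, ..., e5 in the basis a, b, c, x, y, z. *)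
Definition Bm (R : comUnitRingType) : 'M[R]_6 :=
  \matrix_(i, j) (nth 0 (nth [::] [:: [:: 1; 0; 0; 0; 0; 0]; [:: 0; 1; 0; 0; 0; 0];
    [:: 1; 1; 1; 0; 0; 0]; [:: 0; 1; 1; 0; 1; 1]; [:: 1; 0; 1; 1; 0; 1];
    [:: 1; 1; 1; 1; 1; 1]]%N i) j)%:R.

Definition Bim (R : comUnitRingType) : 'M[R]_6 :=
  \matrix_(i, j) (nth 0 (nth [::] [:: [:: 1; 0; 0; 0; 0; 0]; [:: 0; 1; 0; 0; 0; 0];
    [:: 1; 1; 1; 0; 0; 0]; [:: 1; 0; 0; 1; 0; 1]; [:: 0; 1; 0; 0; 1; 1];
    [:: 1; 1; 1; 1; 1; 1]]%N i) j)%:R.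

Section Char2Basis.
Variable R : comUnitRingType.
Hypothesis h2 : 2%:R = 0 :> R.

Lemma Bm_Bim : Bm R *m Bim R = 1%:M.
Proof.
apply/matrixP => i j; rewrite !mxE sum_ord6 !mxE.
by move: i j; do 2!apply: ord6_cases => /=; char2_ring h2.
Qed.

Lemma Bim_Bm : Bim R *m Bm R = 1%:M.
Proof.
apply/matrixP => i j; rewrite !mxE sum_ord6 !mxE.
by move: i j; do 2!apply: ord6_cases => /=; char2_ring h2.
Qed.

Lemma scmul_matsuo_Bm (u v : 'rV[R]_6) :
  scmul (matsuo_sc R) (u *m Bm R) (v *m Bm R) = scmul (sc6 R) u v *m Bm R.
Proof.
rewrite scmul_matsuo scmul_sc6; apply/rowP => k.
rewrite !mxE sum_ord6 !mxE /line_mul !mxE !sum_ord6 !mxE.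
by move: k; apply: ord6_cases => /=; char2_ring h2.
Qed.

End Char2Basis.

Definition Pq (R : comUnitRingType) : 'M[R]_(6, 5) := \matrix_(i, j) Bim R i (emb5 j).

Definition Sq (R : comUnitRingType) : 'M[R]_(5, 6) := \matrix_(i, j) Bm R (emb5 i) j.

Lemma PqE (R : comUnitRingType) (u : 'rV[R]_6) : u *m Pq R = restr5 (u *m Bim R).
Proof. by apply/rowP => j; rewrite !mxE; apply: eq_bigr => i _; rewrite mxE. Qed.

Lemma SqE (R : comUnitRingType) (w : 'rV[R]_5) : w *m Sq R = ext5 w *m Bm R.
Proof.
apply/rowP => k; rewrite !mxE sum_ord5 sum_ord6 !mxE /=.
by rewrite mul0r addr0.
Qed.

Section Quotient.
Variable R : comUnitRingType.
Hypothesis h2 : 2%:R = 0 :> R.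

Lemma Sq_Pq : Sq R *m Pq R = 1%:M.
Proof.
apply/row_matrixP => i; rewrite !rowE mulmxA SqE PqE -mulmxA (Bm_Bim h2) mulmx1.
by rewrite ext5K mulmx1.
Qed.

Lemma scmul_Bim (u v : 'rV[R]_6) :
  scmul (sc6 R) (u *m Bim R) (v *m Bim R) = scmul (matsuo_sc R) u v *m Bim R.
Proof. exact: (scmul_mulmx_inv (Bm_Bim h2) (Bim_Bm h2) (scmul_matsuo_Bm h2)). Qed.

Lemma mulA_Pq (u v : 'rV[R]_6) :
  Defs.mulA u v *m Pq R = scmul (sc5 R) (u *m Pq R) (v *m Pq R).
Proof. by rewrite scmul_sc5 !PqE /Defs.mulA -scmul_Bim scmul_sc6 restr5_mul6. Qed.

End Quotient.

Lemma Pq_ker (k : fieldType) (h2 : 2%:R = 0 :> k) (v : 'rV[k]_6) :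
  v *m Pq k = 0 <-> in_annA v.
Proof.
have Bim_inj : injective (fun x : 'rV[k]_6 => x *m Bim k).
  by apply: (@can_inj _ _ _ (fun x => x *m Bm k)) => x; rewrite -mulmxA (Bim_Bm h2) mulmx1.
have mulA_Bim (w : 'rV[k]_6) : Defs.mulA v w *m Bim k = mul6 (v *m Bim k) (w *m Bim k).
  by rewrite /Defs.mulA -scmul_Bim // scmul_sc6.
rewrite PqE; split=> [vK w | vA].
  by apply: Bim_inj; rewrite /= mulA_Bim /mul6 vK mul5_0l ext5_0 mul0mx.
apply: mul5_ann_free => j; rewrite -[erow k j]ext5K -restr5_mul6.
have -> : ext5 (erow k j) = ext5 (erow k j) *m Bm k *m Bim k.
  by rewrite -mulmxA (Bm_Bim h2) mulmx1.
by rewrite -mulA_Bim vA mul0mx restr5_0.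
Qed.

Lemma ann_quotient_iso (k : fieldType) (h2 : 2%:R = 0 :> k) n'
    (sc' : 'I_n' -> 'I_n' -> 'rV[k]_n') (P : 'M[k]_(6, n')) :
  ann_quotient_model sc' P ->
  exists (L : 'M[k]_(5, n')) (L' : 'M[k]_(n', 5)),
    [/\ L *m L' = 1%:M, L' *m L = 1%:M &
        forall u v, scmul sc' (u *m L) (v *m L) = scmul (sc5 k) u v *m L].
Proof.
case=> Pfull Pker Pmul; have [S SP] := row_fullP Pfull.
have PqSqP : Pq k *m Sq k *m P = P.
  by apply: mulmx_ker_factor (Sq_Pq h2) _ => v /(Pq_ker h2)/Pker.
have PSPq : P *m S *m Pq k = Pq k.
  by apply: mulmx_ker_factor SP _ => v /Pker/(Pq_ker h2).
exists (Sq k *m P), (S *m Pq k); split.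
- by rewrite -!mulmxA (mulmxA P) PSPq (Sq_Pq h2).
- by rewrite -!mulmxA (mulmxA (Pq k)) PqSqP SP.
move=> u v; rewrite !mulmxA -Pmul -[in LHS]PqSqP !mulmxA (mulA_Pq h2).
by rewrite -!(mulmxA _ (Sq k)) (Sq_Pq h2) !mulmx1.
Qed.

Lemma map_sc5 (aR rR : comUnitRingType) (f : {rmorphism aR -> rR}) i j :
  map_mx f (sc5 aR i j) = sc5 rR i j.
Proof.
rewrite /sc5 !mul5_erow; move: i j; do 2!apply: ord5_cases;
  by rewrite /mul5_table /= ?map_mx0 /erow ?map_delta_mx.
Qed.

Lemma bc_quotient_iso (k : fieldType) (R : comUnitAlgType k) n'
    (sc' : 'I_n' -> 'I_n' -> 'rV[k]_n') (L : 'M[k]_(5, n')) :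
  (forall u v, scmul sc' (u *m L) (v *m L) = scmul (sc5 k) u v *m L) ->
  forall u v : 'rV[R]_5,
    scmul (bc R sc') (u *m map_mx (in_alg R) L) (v *m map_mx (in_alg R) L) =
    scmul (sc5 R) u v *m map_mx (in_alg R) L.
Proof.
move=> hL; apply: scmul_mulmx_basis => i j.
by rewrite -!map_row /bc -map_scmul !rowE hL scmul_delta map_mxM map_sc5.
Qed.

(** * Automorphisms of A *)

Definition proj5 (i : 'I_6) : 'I_5 :=
  match val i with 0 => q0 | 1 => q1 | 2 => q2 | 3 => q3 | _ => q4 end.

Definition n5 (j : 'I_2) : 'I_5 := match val j with 0 => q0 | _ => q1 end.

Definition block5 (R : comUnitRingType) (g : 'M[R]_6) : 'M[R]_5 :=
  \matrix_(i, j) g (emb5 i) (emb5 j).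

Definition fpart (R : comUnitRingType) (g : 'M[R]_6) : 'rV[R]_2 := \row_j g (emb5 (n5 j)) o5.

Definition Tpart (R : comUnitRingType) (b : 'M[R]_5) : 'M[R]_2 :=
  \matrix_(i, j) b (n5 i) (n5 j).

Definition J2 (R : comUnitRingType) : 'M[R]_2 := \matrix_(i, j) (i != j)%:R.

Definition wpart (R : comUnitRingType) (g : 'M[R]_6) : 'rV[R]_2 :=
  fpart g *m J2 R *m Tpart (block5 g).

Definition aut6_of (R : comUnitRingType) (b : 'M[R]_5) (f : 'rV[R]_2) (t : R) : 'M[R]_6 :=
  \matrix_(i, j)
    if j == o5 then match val i with 0 => f 0 j0 | 1 => f 0 j1 | 5 => t | _ => 0 end
    else if i == o5 then 0 else b (proj5 i) (proj5 j).

Section Aut6.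
Variable R : comUnitRingType.
Hypothesis h2 : 2%:R = 0 :> R.
Implicit Types (g h : 'M[R]_6) (b : 'M[R]_5).

Definition mulmorph6 g := forall u v, mul6 (u *m g) (v *m g) = mul6 u v *m g.

Lemma is_aut6P g : is_aut (sc6 R) g <-> g \in unitmx /\ mulmorph6 g.
Proof.
rewrite /is_aut /mulmorph6.
by split=> -[gU hg]; split=> // u v; move: (hg u v); rewrite !scmul_sc6.
Qed.

Lemma restr5_mulmx (x : 'rV[R]_6) g :
  restr5 (x *m g) = restr5 x *m block5 g + x 0 o5 *: restr5 (row o5 g).
Proof. by apply/rowP => j; rewrite !mxE sum_ord6 sum_ord5 !mxE /=; ring. Qed.

Lemma restr5_row g i : restr5 (row (emb5 i) g) = row i (block5 g).
Proof. by apply/rowP => j; rewrite !mxE. Qed.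

Lemma block5_mul g h : restr5 (row o5 h) = 0 -> block5 (g *m h) = block5 g *m block5 h.
Proof.
move=> h5; apply/row_matrixP => i.
by rewrite row_mul -restr5_row row_mul restr5_mulmx h5 scaler0 addr0 restr5_row.
Qed.

Lemma corner_mul g h : restr5 (row o5 g) = 0 -> (g *m h) o5 o5 = g o5 o5 * h o5 o5.
Proof.
move/rowP=> g5; move: (g5 q0) (g5 q1) (g5 q2) (g5 q3) (g5 q4); rewrite !mxE /=.
by move=> z0 z1 z2 z3 z4; rewrite sum_ord6 z0 z1 z2 z3 z4 !mul0r !add0r.
Qed.

Lemma block5_1 : block5 1%:M = 1%:M :> 'M[R]_5.
Proof. by apply/matrixP; do 2!apply: ord5_cases; rewrite !mxE. Qed.

Lemma restr5_erow5 : restr5 (erow R o5) = 0.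
Proof. by apply/rowP => j; rewrite !mxE; move: j; apply: ord5_cases. Qed.

Lemma aut6_row5 g : is_aut (sc6 R) g -> restr5 (row o5 g) = 0.
Proof.
(* [row o5 g] is the image of the annihilating e5, and A' has no annihilator. *)
case/is_aut6P=> gU hg; apply: mul5_ann_free => j.
have := hg (erow R o5) (ext5 (erow R j) *m invmx g).
rewrite mulmxKV // -rowE /mul6 ext5K restr5_erow5 mul5_0l ext5_0 mul0mx.
by move/(congr1 (@restr5 R)); rewrite ext5K restr5_0.
Qed.

Lemma mulmorph6_block g : mulmorph6 g -> restr5 (row o5 g) = 0 -> mulmorph5 (block5 g).
Proof.
move=> hg g5 u v.
have E w : w *m block5 g = restr5 (ext5 w *m g).
  by rewrite restr5_mulmx g5 scaler0 addr0 ext5K.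
by rewrite !E -restr5_mul6 hg /mul6 !ext5K.
Qed.

Lemma restr5_erow i : restr5 (erow R (emb5 i)) = erow R i.
Proof. by apply/rowP => j; rewrite !mxE; move: i j; do 2!apply: ord5_cases. Qed.

Lemma ext5_erow i : ext5 (erow R i) = erow R (emb5 i).
Proof. by apply/rowP => j; rewrite !mxE; move: i j; apply: ord5_cases; apply: ord6_cases. Qed.

Lemma mulmorph6_col5 g : mulmorph6 g -> [/\ g o2 o5 = 0, g o3 o5 = 0 & g o4 o5 = 0].
Proof.
move=> hg.
have c i j : (mul6 (erow R (emb5 i)) (erow R (emb5 j)) *m g) 0 o5 = 0 by rewrite -hg mxE.
move: (c q0 q1) (c q0 q4) (c q1 q3).
by rewrite /mul6 !restr5_erow !mul5_erow /mul5_table /= !ext5_erow -!rowE !mxE.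
Qed.

Lemma aut6_parts g : is_aut (sc6 R) g -> is_aut (sc5 R) (block5 g) /\ g o5 o5 \is a GRing.unit.
Proof.
move=> gA; have [gU _] := gA; have giA := is_aut_inv gA.
have bb : block5 g *m block5 (invmx g) = 1%:M.
  by rewrite -block5_mul ?mulmxV ?block5_1 ?aut6_row5.
have tt : g o5 o5 * invmx g o5 o5 = 1.
  by rewrite -corner_mul ?mulmxV ?mxE ?aut6_row5.
split; last by apply/unitrPr; exists (invmx g o5 o5).
apply/is_aut5P; split; first by case/mulmx1_unit: bb.
by apply: mulmorph6_block; [case/is_aut6P: gA | exact: aut6_row5].
Qed.

Lemma aut6E g : is_aut (sc6 R) g -> g = aut6_of (block5 g) (fpart g) (g o5 o5).
Proof.
move=> gA; have /is_aut6P[_ /mulmorph6_col5[c2 c3 c4]] := gA.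
move/rowP: (aut6_row5 gA) => z; move: (z q0) (z q1) (z q2) (z q3) (z q4).
rewrite !mxE /= => z0 z1 z2 z3 z4.
by apply/matrixP; do 2!apply: ord6_cases; rewrite !mxE /= ?mxE.
Qed.

Lemma block5_aut6_of b f t : block5 (aut6_of b f t) = b.
Proof. by apply/matrixP; do 2!apply: ord5_cases; rewrite !mxE. Qed.

Lemma fpart_aut6_of b f t : fpart (aut6_of b f t) = f.
Proof. by apply/rowP; apply: ord2_cases; rewrite !mxE. Qed.

Lemma corner_aut6_of b f t : aut6_of b f t o5 o5 = t.
Proof. by rewrite mxE. Qed.

Lemma restr5_row5_aut6_of b f t : restr5 (row o5 (aut6_of b f t)) = 0.
Proof. by apply/rowP; apply: ord5_cases; rewrite !mxE. Qed.

Lemma aut6_of_mul b b' f f' t t' : filtered5 b ->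
  aut6_of b f t *m aut6_of b' f' t' = aut6_of (b *m b') (f' *m (Tpart b)^T + t' *: f) (t * t').
Proof.
case=> z20 z21 z30 z31 [_ z40 z41 _].
apply/matrixP => i j; rewrite !mxE sum_ord6 !mxE.
move: i j; do 2!apply: ord6_cases;
  rewrite /= ?mxE ?sum_ord5 ?sum_ord2 ?mxE /= ?z20 ?z21 ?z30 ?z31 ?z40 ?z41; ring.
Qed.

Lemma aut6_of1 : aut6_of (1%:M : 'M[R]_5) 0 1 = 1%:M.
Proof. by apply/matrixP; do 2!apply: ord6_cases; rewrite !mxE. Qed.

Lemma restr5_aut6_of (u : 'rV[R]_6) b f t : restr5 (u *m aut6_of b f t) = restr5 u *m b.
Proof. by rewrite restr5_mulmx restr5_row5_aut6_of scaler0 addr0 block5_aut6_of. Qed.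

Lemma ext5_aut6_of (w : 'rV[R]_5) b f t : w 0 q0 = 0 -> w 0 q1 = 0 ->
  ext5 w *m aut6_of b f t = ext5 (w *m b).
Proof.
move=> w0 w1; apply/rowP => k; rewrite !mxE sum_ord6 sum_ord5 !mxE.
by move: k; apply: ord6_cases; rewrite /= ?mxE ?sum_ord5 ?mxE /= ?w0 ?w1; ring.
Qed.

Lemma Tpart_mul b b' : filtered5 b' -> Tpart (b *m b') = Tpart b *m Tpart b'.
Proof.
case=> z20 z21 z30 z31 [_ z40 z41 _].
apply/matrixP => i j; rewrite !mxE sum_ord5 sum_ord2 !mxE.
by move: i j; do 2!apply: ord2_cases; rewrite /= ?z20 ?z21 ?z30 ?z31 ?z40 ?z41; ring.
Qed.

Lemma aut6_of_aut b f t :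
  is_aut (sc5 R) b -> t \is a GRing.unit -> is_aut (sc6 R) (aut6_of b f t).
Proof.
move=> bA tU; have /is_aut5P[bU bM] := bA.
have /is_aut5P[_ /mulmorph5_filtered biF] := is_aut_inv bA.
apply/is_aut6P; split=> [|u v]; last first.
  by rewrite /mul6 !restr5_aut6_of bM ext5_aut6_of // mxE.
pose h := aut6_of (invmx b) (- (t^-1 *: (f *m (Tpart (invmx b))^T))) t^-1.
suff /mulmx1_unit[] : h *m aut6_of b f t = 1%:M by [].
by rewrite aut6_of_mul // mulVmx // mulVr // scalerN scalerA mulrV // scale1r addrN aut6_of1.
Qed.

Lemma Tpart_aut5 b : is_aut (sc5 R) b -> Tpart b = twist (Gpart b).
Proof.
move=> bA; rewrite {1}(aut5E h2 bA).
by apply/matrixP; do 2!apply: ord2_cases; rewrite !mxE /= !mxE.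
Qed.

Lemma J2_unit : J2 R \in unitmx.
Proof.
suff /mulmx1_unit[] : J2 R *m J2 R = 1%:M by [].
by apply/matrixP; do 2!apply: ord2_cases; rewrite !mxE sum_ord2 !mxE /=; ring.
Qed.

Lemma J2_conj (T : 'M[R]_2) : T^T *m J2 R *m T = \det T *: J2 R.
Proof.
apply/matrixP => i j; rewrite det_mx2 !mxE !sum_ord2 !mxE !sum_ord2 !mxE.
by move: i j; do 2!apply: ord2_cases => /=; char2_ring h2.
Qed.

Lemma det_twist (G : 'M[R]_2) : G \in unitmx -> \det (twist G) = 1.
Proof.
move=> /det_invE eD; rewrite det_mx2 !mxE.
by char2_ring_with h2 eD.
Qed.

Lemma wpart_aut6_of b f t : wpart (aut6_of b f t) = f *m J2 R *m Tpart b.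
Proof. by rewrite /wpart fpart_aut6_of block5_aut6_of. Qed.

Lemma wpart_mul b b' f f' t t' : is_aut (sc5 R) b -> is_aut (sc5 R) b' ->
  wpart (aut6_of b f t *m aut6_of b' f' t') =
  t' *: (wpart (aut6_of b f t) *m twist (Gpart b')) + wpart (aut6_of b' f' t').
Proof.
move=> bA b'A; have /is_aut5P[_ /mulmorph5_filtered bF] := bA.
have /is_aut5P[_ /mulmorph5_filtered b'F] := b'A.
rewrite aut6_of_mul // !wpart_aut6_of Tpart_mul // (Tpart_aut5 b'A) mulmxDl !mulmxDl.
rewrite -!scalemxAl addrC; congr (_ + _); first by rewrite !mulmxA.
rewrite mulmxA -(mulmxA f') -(mulmxA f') J2_conj.
by rewrite (Tpart_aut5 bA) det_twist ?scale1r // aut5_Gpart_unit.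
Qed.

End Aut6.

Section Naturality.
Variables (aR rR : comUnitRingType) (f : {rmorphism aR -> rR}).

Lemma block5_map (g : 'M[aR]_6) : block5 (map_mx f g) = map_mx f (block5 g).
Proof. by apply/matrixP => i j; rewrite !mxE. Qed.

Lemma wpart_map (g : 'M[aR]_6) : wpart (map_mx f g) = map_mx f (wpart g).
Proof.
have J2_map : map_mx f (J2 aR) = J2 rR by apply/matrixP => i j; rewrite !mxE rmorph_nat.
have fpart_map : fpart (map_mx f g) = map_mx f (fpart g) by apply/rowP => j; rewrite !mxE.
have Tpart_map (b : 'M[aR]_5) : Tpart (map_mx f b) = map_mx f (Tpart b).
  by apply/matrixP => i j; rewrite !mxE.
by rewrite /wpart !map_mxM fpart_map J2_map block5_map Tpart_map.
Qed.

Lemma Bm_map : map_mx f (Bm aR) = Bm rR.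
Proof. by apply/matrixP => i j; rewrite !mxE rmorph_nat. Qed.

Lemma Bim_map : map_mx f (Bim aR) = Bim rR.
Proof. by apply/matrixP => i j; rewrite !mxE rmorph_nat. Qed.

End Naturality.

Lemma aut6_group_functor_iso (k : fieldType) : 2 \in [pchar k] ->
  @group_functor_iso k (fun R => 'M[R]_6) (fun R => ('rV[R]_2 * ('M[R]_5 * R))%type)
    (fun R g => is_aut (sc6 R) g) (fun R y => is_aut (sc5 R) y.2.1 /\ y.2.2 \is a GRing.unit)
    (fun R g h => g *m h)
    (fun R => sdmul (fun h h' : 'M[R]_5 * R => (h.1 *m h'.1, h.2 * h'.2))
                    (fun h w => h.2 *: (w *m twist (Gpart h.1))))
    (fun R S f g => map_mx f g) (fun R S f y => (map_mx f y.1, (map_mx f y.2.1, f y.2.2)))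
    (fun R g => (wpart g, (block5 g, g o5 o5))).
Proof.
move=> hk.
split=> [R g | R g h gA hA | R g h gA hA [ew eb et] | R [w [b t]] /= [bA tU] | R S f g _].
- exact: aut6_parts.
- have h2R := char2_alg R hk.
  rewrite /sdmul /= block5_mul ?corner_mul ?aut6_row5 //; congr (_, (_, _)).
  rewrite {1}(aut6E gA) {1}(aut6E hA).
  rewrite (wpart_mul h2R _ _ _ _ (aut6_parts gA).1 (aut6_parts hA).1).
  by rewrite -(aut6E gA) -(aut6E hA).
- have h2R := char2_alg R hk; have [bA _] := aut6_parts hA.
  have MU : J2 R *m Tpart (block5 h) \in unitmx.
    rewrite unitmx_mul J2_unit ?(Tpart_aut5 h2R) // unitmxE (det_twist h2R) ?unitr1 //.
    exact: aut5_Gpart_unit.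
  rewrite (aut6E gA) (aut6E hA) eb et; congr aut6_of.
  by move: ew; rewrite /wpart eb -!mulmxA => /(can_inj (mulmxK MU)).
- have h2R := char2_alg R hk.
  have MU : J2 R *m Tpart b \in unitmx.
    rewrite unitmx_mul J2_unit (Tpart_aut5 h2R) // unitmxE (det_twist h2R) ?unitr1 //.
    exact: aut5_Gpart_unit.
  exists (aut6_of b (w *m invmx (J2 R *m Tpart b)) t); first exact: aut6_of_aut.
  by rewrite wpart_aut6_of block5_aut6_of corner_aut6_of -mulmxA mulmxKV.
- by rewrite wpart_map block5_map mxE.
Qed.

Lemma sdprod_conj_group_functor_iso (k : fieldType) n
    (sc : forall R : comUnitAlgType k, 'I_n -> 'I_n -> 'rV[R]_n)
    (L : forall R : comUnitAlgType k, 'M[R]_(5, n))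
    (L' : forall R : comUnitAlgType k, 'M[R]_(n, 5)) :
  (forall R, L R *m L' R = 1%:M) -> (forall R, L' R *m L R = 1%:M) ->
  (forall R u v, scmul (sc R) (u *m L R) (v *m L R) = scmul (sc5 R) u v *m L R) ->
  (forall (R S : comUnitAlgType k) (f : {lrmorphism R -> S}), map_mx f (L R) = L S) ->
  (forall (R S : comUnitAlgType k) (f : {lrmorphism R -> S}), map_mx f (L' R) = L' S) ->
  @group_functor_iso k
    (fun R => ('rV[R]_2 * ('M[R]_5 * R))%type) (fun R => ('rV[R]_2 * ('M[R]_n * R))%type)
    (fun R y => is_aut (sc5 R) y.2.1 /\ y.2.2 \is a GRing.unit)
    (fun R y => is_aut (sc R) y.2.1 /\ y.2.2 \is a GRing.unit)
    (fun R => sdmul (fun h h' : 'M[R]_5 * R => (h.1 *m h'.1, h.2 * h'.2))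
                    (fun h w => h.2 *: (w *m twist (Gpart h.1))))
    (fun R => sdmul (fun h h' : 'M[R]_n * R => (h.1 *m h'.1, h.2 * h'.2))
                    (fun h w => h.2 *: (w *m twist (Gpart (L R *m h.1 *m L' R)))))
    (fun R S f y => (map_mx f y.1, (map_mx f y.2.1, f y.2.2)))
    (fun R S f y => (map_mx f y.1, (map_mx f y.2.1, f y.2.2)))
    (fun R y => (y.1, (L' R *m y.2.1 *m L R, y.2.2))).
Proof.
move=> LL' L'L hL fL fL'.
have conjK (R : comUnitAlgType k) (b : 'M[R]_5) : L R *m (L' R *m b *m L R) *m L' R = b.
  by rewrite !mulmxA LL' mul1mx -mulmxA LL' mulmx1.
have autE (R : comUnitAlgType k) (b : 'M[R]_5) :
    is_aut (sc R) (L' R *m b *m L R) <-> is_aut (sc5 R) b.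
  by rewrite (is_aut_conj (LL' R) (L'L R) (hL R)) conjK.
split=> [R [w [b t]] /= [bA tU] | R [w [b t]] [w' [b' t']] _ _ | R [w [b t]] [w' [b' t']] _ _
        | R [w [h t]] /= [hA tU] | R S f [w [b t]] _].
- by split=> //; apply/autE.
- rewrite /sdmul /= conjK; congr (_, (_, _)).
  by rewrite -!mulmxA (mulmxA (L R)) LL' mul1mx.
- case=> -> eb ->; congr (_, (_, _)).
  by rewrite -[b]conjK -[b']conjK eb.
- have hK : L' R *m (L R *m h *m L' R) *m L R = h.
    by rewrite !mulmxA L'L mul1mx -mulmxA L'L mulmx1.
  by exists (w, (L R *m h *m L' R, t)); rewrite /= ?hK //; split=> //; apply/autE; rewrite hK.
- by rewrite /= !map_mxM fL fL'.
Qed.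

Lemma GL2_right_action_mulmx (k : fieldType) :
  GL2_right_action (fun (R : comUnitAlgType k) (M : 'M[R]_2) (v : 'rV[R]_2) => v *m M).
Proof.
split=> [R M v w _ | R M M' v _ _ | R v | R S f M v _].
- exact: mulmxDl.
- exact: mulmxA.
- exact: mulmx1.
- exact: map_mxM.
Qed.

Theorem proposition6p12 (k : fieldType) (hk : 2 \in [pchar k]) (n' : nat)
  (sc' : 'I_n' -> 'I_n' -> 'rV[k]_n') (P : 'M[k]_(6, n'))
  (hA' : ann_quotient_model sc' P) :
  exists (rho : forall R : comUnitAlgType k, 'M[R]_2 -> 'rV[R]_2 -> 'rV[R]_2)
         (psi : forall R : comUnitAlgType k, 'M[R]_n' -> ('rV[R]_2 * 'M[R]_2)%type),
  [/\ GL2_right_action rho,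
      @group_functor_iso k
        (fun R : comUnitAlgType k => 'M[R]_n')
        (fun R : comUnitAlgType k => ('rV[R]_2 * 'M[R]_2)%type)
        (fun R g => is_aut (bc R sc') g)
        (fun R y => y.2 \in unitmx)
        (fun R g h => g *m h)
        (fun R => sdmul (@mulmx R 2 2 2) (rho R))
        (fun R S f g => map_mx f g)
        (fun R S f y => (map_mx f y.1, map_mx f y.2))
        psi &
      exists phi : forall R : comUnitAlgType k,
                     'M[R]_6 -> ('rV[R]_2 * ('M[R]_n' * R))%type,
        @group_functor_iso k
          (fun R : comUnitAlgType k => 'M[R]_6)
          (fun R : comUnitAlgType k => ('rV[R]_2 * ('M[R]_n' * R))%type)
          (fun R g => is_aut (matsuo_sc R) g)
          (fun R y => is_aut (bc R sc') y.2.1 /\ y.2.2 \is a GRing.unit)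
          (fun R g h => g *m h)
          (fun R => sdmul (fun h h' : 'M[R]_n' * R => (h.1 *m h'.1, h.2 * h'.2))
                          (fun h w => h.2 *: (w *m twist (psi R h.1).2)))
          (fun R S f g => map_mx f g)
          (fun R S f y => (map_mx f y.1, (map_mx f y.2.1, f y.2.2)))
          phi].
Proof.
have [L [L' [LL' L'L hL]]] := ann_quotient_iso (pcharf0 hk) hA'.
pose Lr (R : comUnitAlgType k) := map_mx (in_alg R) L.
pose L'r (R : comUnitAlgType k) := map_mx (in_alg R) L'.
have LLr R : Lr R *m L'r R = 1%:M by rewrite -map_mxM LL' map_mx1.
have L'Lr R : L'r R *m Lr R = 1%:M by rewrite -map_mxM L'L map_mx1.
have hLr (R : comUnitAlgType k) := bc_quotient_iso (R := R) hL.
have BB (R : comUnitAlgType k) : Bm R *m Bim R = 1%:M := Bm_Bim (char2_alg R hk).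
have BB' (R : comUnitAlgType k) : Bim R *m Bm R = 1%:M := Bim_Bm (char2_alg R hk).
have hB (R : comUnitAlgType k) := scmul_matsuo_Bm (char2_alg R hk).
exists (fun R M v => v *m M).
exists (fun R g => (zpart (Lr R *m g *m L'r R), Gpart (Lr R *m g *m L'r R))).
split; first exact: GL2_right_action_mulmx.
  apply: group_functor_iso_comp (aut5_group_functor_iso hk).
  by apply: conj_group_functor_iso => // R S f; apply: map_mx_in_alg.
eexists; apply: group_functor_iso_comp; last first.
  by apply: (sdprod_conj_group_functor_iso LLr L'Lr hLr) => R S f; apply: map_mx_in_alg.
apply: group_functor_iso_comp (aut6_group_functor_iso hk).
by apply: (conj_group_functor_iso BB BB' hB) => R S f; rewrite ?Bm_map ?Bim_map.
Qed.
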